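(* Let $A$ be an associative ring (not necessarily commutative or unital), $n\ge 2$, $1\le k\le n-1$, and let $\omega\in PBr_n$, viewed as an element of $Br_n(A)$ via $y_i\mapsto y_i^0$. Then there exists $\omega'\in Br_n$ (depending on $k$ and $\omega$ but not on $a$) such that $y_k^a\,\omega = \omega'\,y_k^a$ in $Br_n(A)$ for every $a\in A$. Consequently, for every $k$ and every $a\in A$, the element $y_k^a (y_k^0)^{-1}\in Br_n(A)$ commutes with every element of $PBr_n$.
   Context: $Br_n(A)$ is the group generated by $y_i^a$, $1\le i\le n-1$, $a\in A$, with relations for all $a,b,c\in A$: $y_i^a y_i^0 y_i^b = y_i^0 y_i^0 y_i^{a+b}$; $y_i^a y_j^b = y_j^b y_i^a$ if $|i-j|\ge 2$; $y_i^a y_{i+1}^b y_i^c = y_{i+1}^c y_i^{b+ac} y_{i+1}^a$. The Artin braid group $Br_n$ (generators $y_i$, relations $y_iy_j=y_jy_i$ for $|i-j|\ge 2$, $y_iy_{i+1}y_i=y_{i+1}y_iy_{i+1}$) is identified with the subgroup of $Br_n(A)$ generated by the $y_i^0$ (i.e. with $Br_n(0)$). $PBr_n$ is the pure braid group, the kernel of the surjection $Br_n\to\mathcal S_n$, $y_i\mapsto (i\ i+1)$. *)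

From mathcomp Require Import all_boot all_order all_algebra all_fingroup.
Set Implicit Arguments. Unset Strict Implicit. Unset Printing Implicit Defensive.
Import GRing.Theory.
Local Open Scope ring_scope.

Section BrA.
Variables (n : nat) (A : zmodType) (mul : A -> A -> A).

(* A letter (i, a, e) stands for y_{i+1}^a if e = false, (y_{i+1}^a)^{-1} if e = true;
   indices i : 'I_(n.-1) encode 1 <= i+1 <= n-1. *)
Definition letter := ('I_n.-1 * A * bool)%type.
Definition word := seq letter.
Definition G (i : 'I_n.-1) (a : A) : letter := (i, a, false).
Definition Ginv (i : 'I_n.-1) (a : A) : letter := (i, a, true).
Definition flip (l : letter) : letter := (l.1, ~~ l.2).

Inductive br_eq : word -> word -> Prop :=
| br_refl w : br_eq w w
| br_sym w1 w2 : br_eq w1 w2 -> br_eq w2 w1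
| br_trans w1 w2 w3 : br_eq w1 w2 -> br_eq w2 w3 -> br_eq w1 w3
| br_ctx u v w1 w2 : br_eq w1 w2 -> br_eq (u ++ w1 ++ v) (u ++ w2 ++ v)
| br_free l : br_eq [:: l; flip l] [::]
| br_rel1 i a b :
    br_eq [:: G i a; G i 0; G i b] [:: G i 0; G i 0; G i (a + b)]
| br_rel2 (i j : 'I_n.-1) a b : (2 <= `|(i : nat) - (j : nat)|)%N ->
    br_eq [:: G i a; G j b] [:: G j b; G i a]
| br_rel3 (i j : 'I_n.-1) a b c : (j : nat) = i.+1 ->
    br_eq [:: G i a; G j b; G i c] [:: G j c; G i (b + mul a c); G j a].

End BrA.

(* Words in the Artin generators y_{i+1}^{±1} of Br_n (true = inverse). *)
Definition aword (n : nat) := seq ('I_n.-1 * bool).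

Definition embed (n : nat) (A : zmodType) (w : aword n) : word n A :=
  map (fun l => (l.1, 0, l.2)) w.

(* The image in S_n of an Artin word, y_{i+1} |-> transposition (i+1 i+2),
   written 0-based as tperm i (i+1) on 'I_(n.-1).+1 (= 'I_n since n >= 2). *)
Definition perm_of (n : nat) (w : aword n) : {perm 'I_(n.-1).+1} :=
  foldr (fun (l : 'I_n.-1 * bool) p => (tperm (inord (l.1 : nat) : 'I_(n.-1).+1) (inord (l.1 : nat).+1) * p)%g) 1%g w.

Definition pure (n : nat) (w : aword n) : Prop := perm_of w = 1%g.

(* For distinct strands p, q let X(p, q) be x = y_p^a (y_p^0)^-1 if p < q and
   z = (y_q^0)^-1 y_q^a if q < p, transported from the adjacent strands to (p, q) by
   conjugation with y_(r+1)^0 ... y_(s-1)^0, where {r < s} = {p, q}.  A case analysis on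
   the position of j, using a few consequences of the defining relations, shows
   X(p, q) y_j^e = y_j^e X(t_j p, t_j q) with t_j the transposition (j j+1); for
   {p, q} = {j, j+1} this is x y_j^0 = y_j^0 z and z y_j^0 = y_j^0 x.  Hence
   X(p, q) w = w X(t p, t q) for a braid w with permutation t, and a pure braid w commutes
   with X(k, k+1) = y_k^a (y_k^0)^-1.  Applied to the pure braid y_k^0 w (y_k^0)^-1 this
   gives y_k^a w = w' y_k^a with w' = y_k^0 w (y_k^0)^-1. *)

From Pilot Require Import Defs.
From mathcomp Require Import all_boot all_order all_algebra all_fingroup.
From mathcomp Require Import zify.
From Stdlib Require Import Setoid Morphisms.
Set Implicit Arguments.
Unset Strict Implicit.
Unset Printing Implicit Defensive.
Import GRing.Theory.
Local Open Scope ring_scope.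

#[export] Instance br_eq_Equivalence n A mul : Equivalence (@br_eq n A mul).
Proof. by split; [exact: br_refl | exact: br_sym | exact: br_trans]. Qed.

#[export] Hint Resolve br_refl : core.

#[export] Instance cons_br_eq n A mul :
  Proper (eq ==> @br_eq n A mul ==> @br_eq n A mul) cons.
Proof. by move=> l _ <- u v uv; have := br_ctx [:: l] [::] uv; rewrite !cats0. Qed.

#[export] Instance cat_br_eq n A mul :
  Proper (@br_eq n A mul ==> @br_eq n A mul ==> @br_eq n A mul) cat.
Proof.
move=> u1 u2 u12 v1 v2 v12; transitivity (u1 ++ v2).
  by have := br_ctx u1 [::] v12; rewrite !cats0.
by have := br_ctx [::] v2 u12.
Qed.

Section BraidGroupOverRing.
Variables (A : zmodType) (mul : A -> A -> A).
Local Notation "u ≡ v" := (br_eq mul u v) (at level 70).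

Hypotheses (mulDl : left_distributive mul +%R) (mulDr : right_distributive mul +%R).

Lemma mul0x b : mul 0 b = 0.
Proof. by apply: (addrI (mul 0 b)); rewrite -mulDl !addr0. Qed.

Lemma mulx0 b : mul b 0 = 0.
Proof. by apply: (addrI (mul b 0)); rewrite -mulDr !addr0. Qed.

Section AnyRank.
Variable n : nat.
Implicit Types (l : letter n A) (u v w : word n A).

Lemma flipK : involutive (@flip n A).
Proof. by case=> [[i b] e]; rewrite /flip /= negbK. Qed.

(* Relations are stated with an arbitrary tail [w], so that they can be used by
   setoid rewriting anywhere inside a word. *)

Lemma br_cancel l w : l :: flip l :: w ≡ w.
Proof. by have := br_ctx [::] w (br_free mul l). Qed.

Lemma br_cancelV l w : flip l :: l :: w ≡ w.
Proof. by have := br_cancel (flip l) w; rewrite flipK. Qed.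

Lemma br_cons_move l u v : l :: u ≡ v <-> u ≡ flip l :: v.
Proof. by split=> uv; [rewrite -uv br_cancelV | rewrite uv br_cancel]. Qed.

Definition winv (u : word n A) : word n A := rev (map (@flip n A) u).

Lemma winv_cons l u : winv (l :: u) = winv u ++ [:: flip l].
Proof. by rewrite /winv /= rev_cons cats1. Qed.

Lemma winv_cat u v : winv (u ++ v) = winv v ++ winv u.
Proof. by rewrite /winv map_cat rev_cat. Qed.

Lemma cat_winv u w : u ++ winv u ++ w ≡ w.
Proof.
elim: u w => [|l u IHu] w //=.
by rewrite winv_cons -catA IHu br_cancel.
Qed.

Lemma cat_winvl u w : winv u ++ u ++ w ≡ w.
Proof.
have winvK : winv (winv u) = u by rewrite /winv map_rev revK (mapK flipK).
by have := cat_winv (winv u) w; rewrite winvK.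
Qed.

Lemma conj_winv u x y :
  (forall w, u ++ x ++ w ≡ y ++ u ++ w) ->
  forall w, winv u ++ y ++ w ≡ x ++ winv u ++ w.
Proof.
by move=> uxy w; rewrite -{1}(cat_winv u w) -uxy cat_winvl.
Qed.

Definition idx l : nat := l.1.1.

Lemma br_comm_flip l l' :
  (forall w, l :: l' :: w ≡ l' :: l :: w) ->
  forall w, flip l :: l' :: w ≡ l' :: flip l :: w.
Proof.
move=> comm w; apply/br_cons_move; rewrite flipK.
by rewrite comm br_cancel.
Qed.

Lemma br_comm_far l l' w :
  (2 <= `|idx l - idx l'|)%N -> l :: l' :: w ≡ l' :: l :: w.
Proof.
case: l l' => [[i a] e] [[j b] f]; rewrite /idx /= => far.
have base w' : (i, a, false) :: (j, b, false) :: w' ≡ (j, b, false) :: (i, a, false) :: w'.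
  by have := br_ctx [::] w' (br_rel2 mul a b far).
have {}base w' : (i, a, e) :: (j, b, false) :: w' ≡ (j, b, false) :: (i, a, e) :: w'.
  by case: e; [exact: (br_comm_flip base w') | exact: base].
by case: f => //; symmetry; exact: (br_comm_flip (fun w' => symmetry (base w'))).
Qed.

Lemma br_comm_far_word u l w :
  all (fun l' => 2 <= `|idx l' - idx l|)%N u -> u ++ l :: w ≡ l :: u ++ w.
Proof.
elim: u => [|l' u IHu] //= /andP[far_l' far_u].
by rewrite IHu // br_comm_far.
Qed.

Definition in_range lo hi l := (lo <= idx l < hi)%N.

Lemma all_in_range_winv lo hi u :
  all (in_range lo hi) (winv u) = all (in_range lo hi) u.
Proof. by rewrite all_rev all_map; apply: eq_all => -[[]]. Qed.

Lemma sub_in_range lo hi lo' hi' u : (lo' <= lo)%N -> (hi <= hi')%N ->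
  all (in_range lo hi) u -> all (in_range lo' hi') u.
Proof. by move=> le_lo le_hi; apply: sub_all => l /andP[]; rewrite /in_range; lia. Qed.

End AnyRank.

Section Strands.
Variable m : nat.
Local Notation word := (word m.+2 A).
(* Strands are numbered 0, ..., m+1 and [σ j] is y_(j+1)^0, which exchanges strands
   j and j+1; indices are natural numbers, converted by [inord]. *)
Local Notation gen j a e := ((@inord m j, a, e) : letter m.+2 A).
Local Notation σ j := (gen j 0 false).
Local Notation σ' j := (gen j 0 true).
Local Notation y j a := (gen j a false).
Implicit Types (u v w : word).

Lemma idx_gen j a e : (j <= m)%N -> idx (gen j a e) = j.
Proof. by move=> le_jm; rewrite /idx /= inordK. Qed.

Lemma gen_move j a e u v : gen j a e :: u ≡ v <-> u ≡ gen j a (~~ e) :: v.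
Proof. exact: br_cons_move. Qed.

Lemma sigma_cancel j w : σ j :: σ' j :: w ≡ w.
Proof. exact: (br_cancel (σ j)). Qed.

Lemma sigmaV_cancel j w : σ' j :: σ j :: w ≡ w.
Proof. exact: (br_cancelV (σ j)). Qed.

Lemma br_comm_range u lo hi j a e w :
  all (in_range lo hi) u -> (j <= m)%N -> (hi < j)%N || (j.+2 <= lo)%N ->
  u ++ gen j a e :: w ≡ gen j a e :: u ++ w.
Proof.
move=> u_lohi le_jm far; apply: br_comm_far_word.
by apply: sub_all u_lohi => l /andP[]; rewrite idx_gen //; lia.
Qed.

Definition x_word (a : A) j : word := [:: y j a; σ' j].
Definition z_word (a : A) j : word := [:: σ' j; y j a].

Section LocalRelations.
Variables (a : A) (i : nat).
Hypothesis lt_im : (i < m)%N.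
Local Notation s := (σ i).
Local Notation s' := (σ' i).
Local Notation t := (σ i.+1).
Local Notation t' := (σ' i.+1).

Lemma braid_rel3 b c d w :
  y i b :: y i.+1 c :: y i d :: w ≡ y i.+1 d :: y i (c + mul b d) :: y i.+1 b :: w.
Proof.
have adj : nat_of_ord (@inord m i.+1) = (@inord m i).+1 by rewrite !inordK //; lia.
by have := br_ctx [::] w (@br_rel3 m.+2 A mul _ _ b c d adj).
Qed.

Lemma braid_sts w : s :: t :: s :: w ≡ t :: s :: t :: w.
Proof. by have := braid_rel3 0 0 0 w; rewrite mul0x addr0. Qed.

Lemma braid_yl w : y i a :: t :: s :: w ≡ t :: s :: y i.+1 a :: w.
Proof. by have := braid_rel3 a 0 0 w; rewrite mulx0 addr0. Qed.

Lemma braid_ym w : s :: y i.+1 a :: s :: w ≡ t :: y i a :: t :: w.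
Proof. by have := braid_rel3 0 a 0 w; rewrite mul0x addr0. Qed.

Lemma braid_yr w : s :: t :: y i a :: w ≡ y i.+1 a :: s :: t :: w.
Proof. by have := braid_rel3 0 0 a w; rewrite mul0x add0r. Qed.

Lemma y_comm_sigma2 w : y i a :: s :: s :: w ≡ s :: s :: y i a :: w.
Proof. by have := br_ctx [::] w (@br_rel1 m.+2 A mul (inord i) a 0); rewrite addr0. Qed.

Lemma braid_s't w : s' :: t :: w ≡ t :: s :: t' :: s' :: w.
Proof. by apply/gen_move => /=; rewrite braid_sts !sigma_cancel. Qed.

Lemma braid_t's w : t' :: s :: w ≡ s :: t :: s' :: t' :: w.
Proof. by apply/gen_move => /=; rewrite -braid_sts !sigma_cancel. Qed.

Lemma braid_s'tt w : s' :: t :: t :: w ≡ t :: s :: s :: t' :: s' :: w.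
Proof. by rewrite 2!braid_s't sigmaV_cancel. Qed.

Lemma braid_stts' w : s :: t :: t :: s' :: w ≡ t' :: s :: s :: t :: w.
Proof. by symmetry; apply/gen_move => /=; rewrite -2!braid_sts sigma_cancel. Qed.

Lemma braid_stt w : s :: t :: t :: w ≡ t' :: s :: s :: t :: s :: w.
Proof. by rewrite -braid_stts' sigmaV_cancel. Qed.

Lemma x_word_sigma w : x_word a i ++ s :: w ≡ s :: z_word a i ++ w.
Proof. by rewrite /= sigmaV_cancel sigma_cancel. Qed.

Lemma z_word_sigma w : z_word a i ++ s :: w ≡ s :: x_word a i ++ w.
Proof. by apply/gen_move => /=; rewrite -y_comm_sigma2 sigma_cancel. Qed.

Lemma x_word_comm_sigma2 w : x_word a i ++ t :: t :: w ≡ t :: t :: x_word a i ++ w.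
Proof. by rewrite /= braid_s'tt braid_yl braid_ym sigma_cancel. Qed.

Lemma x_word_braid_l w : x_word a i.+1 ++ s :: w ≡ s :: t' :: x_word a i ++ t :: w.
Proof.
have x_conj_t w' : t :: x_word a i ++ t' :: w' ≡ t' :: x_word a i ++ t :: w'.
  by symmetry; apply/gen_move => /=; rewrite -x_word_comm_sigma2 /= sigma_cancel.
by rewrite /= braid_t's -braid_yr x_conj_t.
Qed.

Lemma x_word_braid_r w : t' :: x_word a i ++ t :: s :: w ≡ s :: x_word a i.+1 ++ w.
Proof. by rewrite /= braid_s't sigmaV_cancel braid_yl sigmaV_cancel. Qed.

Lemma z_word_comm_sigma2 w : z_word a i ++ t :: t :: w ≡ t :: t :: z_word a i ++ w.
Proof.
apply/gen_move => /=; rewrite braid_stts'.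
by symmetry; apply/gen_move => /=; rewrite braid_yr braid_ym.
Qed.

Lemma z_word_braid_l w : z_word a i.+1 ++ s :: w ≡ s :: t' :: z_word a i ++ t :: w.
Proof. by apply/gen_move => /=; rewrite -braid_s't -braid_ym sigmaV_cancel. Qed.

Lemma z_word_braid_r w : t' :: z_word a i ++ t :: s :: w ≡ s :: z_word a i.+1 ++ w.
Proof. by rewrite /= braid_yl braid_s't !sigmaV_cancel. Qed.

End LocalRelations.

Definition shift p q : word := [seq σ j | j <- iota p.+1 (q - p.+1)].

Lemma shift_nil p : shift p p.+1 = [::].
Proof. by rewrite /shift subnn. Qed.

Lemma shift_split p r q : (p < r < q)%N -> shift p q = shift p r ++ σ r :: shift r q.
Proof.
move=> /andP[lt_pr lt_rq]; rewrite /shift.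
have -> : (q - p.+1 = (r - p.+1) + (q - r.+1).+1)%N by lia.
by rewrite iotaD map_cat subnKC.
Qed.

Lemma shift_range p q : (q <= m.+1)%N -> all (in_range p.+1 q) (shift p q).
Proof.
move=> le_qm; apply/allP=> _ /mapP[j + ->]; rewrite mem_iota => /andP[le_pj lt_jq].
by rewrite /in_range idx_gen; lia.
Qed.

Lemma shift_cons p q : (p.+1 < q)%N -> shift p q = σ p.+1 :: shift p.+1 q.
Proof. by move=> lt_pq; rewrite (shift_split (r := p.+1)) ?ltnSn // shift_nil. Qed.

Lemma shift_comm p q j e w : (q <= m.+1)%N -> (j <= m)%N -> (q < j)%N || (j.+2 <= p.+1)%N ->
  shift p q ++ gen j 0 e :: w ≡ gen j 0 e :: shift p q ++ w.
Proof. by move=> le_qm; apply: br_comm_range (shift_range p le_qm). Qed.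

Lemma winv_shift_comm p q j e w : (q <= m.+1)%N -> (j <= m)%N -> (q < j)%N || (j.+2 <= p.+1)%N ->
  winv (shift p q) ++ gen j 0 e :: w ≡ gen j 0 e :: winv (shift p q) ++ w.
Proof. by move=> le_qm; apply: br_comm_range; rewrite all_in_range_winv shift_range. Qed.

Lemma shift_braid p j q w : (p < j)%N -> (j.+2 <= q <= m.+1)%N ->
  shift p q ++ σ j :: w ≡ σ j.+1 :: shift p q ++ w.
Proof.
move=> lt_pj /andP[lt_jq le_qm].
rewrite (@shift_split p j q) ?lt_pj ?(ltnW lt_jq) // (shift_cons lt_jq) -!catA /=.
have comm_r : shift j.+1 q ++ σ j :: w ≡ σ j :: shift j.+1 q ++ w.
  by apply: shift_comm; lia.
have comm_l w' : shift p j ++ σ j.+1 :: w' ≡ σ j.+1 :: shift p j ++ w'.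
  by apply: shift_comm; lia.
by rewrite comm_r braid_sts ?comm_l //; lia.
Qed.

Lemma winv_shift_braid p j q w : (p < j)%N -> (j.+2 <= q <= m.+1)%N ->
  winv (shift p q) ++ σ j.+1 :: w ≡ σ j :: winv (shift p q) ++ w.
Proof.
move=> lt_pj le_jq.
exact: (conj_winv (x := [:: σ j]) (y := [:: σ j.+1]) (fun w' => shift_braid w' lt_pj le_jq)).
Qed.

Definition transp j p : nat := if p == j then j.+1 else if p == j.+1 then j else p.

Lemma transpL j : transp j j = j.+1.
Proof. by rewrite /transp eqxx. Qed.

Lemma transpR j : transp j j.+1 = j.
Proof. by rewrite /transp eqxx gtn_eqF. Qed.

Lemma transp_id j p : p != j -> p != j.+1 -> transp j p = p.
Proof. by rewrite /transp => /negPf -> /negPf ->. Qed.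

Lemma transpK j : involutive (transp j).
Proof. by move=> p; rewrite /transp; repeat case: eqP; lia. Qed.

Lemma transp_le j k p : (j < k)%N -> (p <= k)%N -> (transp j p <= k)%N.
Proof. by rewrite /transp; repeat case: eqP; lia. Qed.

Lemma transp_lt j p q : (p < q)%N -> (j != p) || (q != p.+1) -> (transp j p < transp j q)%N.
Proof. by rewrite /transp; repeat case: eqP; lia. Qed.

Section ConjugateFamily.
Variable c : nat -> word.
Hypothesis c_range : forall j, (j <= m)%N -> all (in_range j j.+1) (c j).
Hypothesis c_comm_sigma2 : forall j, (j < m)%N -> forall w,
  c j ++ σ j.+1 :: σ j.+1 :: w ≡ σ j.+1 :: σ j.+1 :: c j ++ w.
Hypothesis c_braid_l : forall j, (j < m)%N -> forall w,
  c j.+1 ++ σ j :: w ≡ σ j :: σ' j.+1 :: c j ++ σ j.+1 :: w.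
Hypothesis c_braid_r : forall j, (j < m)%N -> forall w,
  σ' j.+1 :: c j ++ σ j.+1 :: σ j :: w ≡ σ j :: c j.+1 ++ w.

Definition conj_word p q : word := winv (shift p q) ++ c p ++ shift p q.
Arguments conj_word : simpl never.

Lemma conj_word_base p : conj_word p p.+1 = c p.
Proof. by rewrite /conj_word shift_nil cats0. Qed.

Lemma conj_word_last p q w : (p < q)%N ->
  conj_word p q.+1 ++ w = σ' q :: conj_word p q ++ σ q :: w.
Proof.
move=> lt_pq; rewrite /conj_word (shift_split (r := q) (q := q.+1)); last by rewrite lt_pq /=.
by rewrite shift_nil winv_cat /= -!catA.
Qed.

Lemma conj_word_range p q : (p < q <= m.+1)%N -> all (in_range p q) (conj_word p q).
Proof.
move=> /andP[lt_pq le_qm].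
have shift_pq : all (in_range p q) (shift p q).
  by apply: sub_in_range (shift_range p le_qm).
rewrite /conj_word !all_cat all_in_range_winv shift_pq andbT /=.
by apply: sub_in_range (c_range _); lia.
Qed.

Lemma conj_word_far lo hi j e w : (lo < hi <= m.+1)%N -> (j <= m)%N ->
  (hi < j)%N || (j.+2 <= lo)%N ->
  conj_word lo hi ++ gen j 0 e :: w ≡ gen j 0 e :: conj_word lo hi ++ w.
Proof. by move=> lohi; apply: br_comm_range (conj_word_range lohi). Qed.

Lemma conj_word_below j hi w : (j.+1 < hi <= m.+1)%N ->
  conj_word j.+1 hi ++ σ j :: w ≡ σ j :: conj_word j hi ++ w.
Proof.
move=> /andP[lt_jhi le_him].
have comm_U w' : shift j.+1 hi ++ σ j :: w' ≡ σ j :: shift j.+1 hi ++ w'.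
  by apply: shift_comm; lia.
have comm_Uinv w' : winv (shift j.+1 hi) ++ σ j :: w' ≡ σ j :: winv (shift j.+1 hi) ++ w'.
  by apply: winv_shift_comm; lia.
rewrite /conj_word (shift_cons lt_jhi) winv_cons -!catA /=.
by rewrite comm_U c_braid_l ?comm_Uinv //; lia.
Qed.

Lemma conj_word_low j hi w : (j.+1 < hi <= m.+1)%N ->
  conj_word j hi ++ σ j :: w ≡ σ j :: conj_word j.+1 hi ++ w.
Proof.
move=> /andP[lt_jhi le_him].
have comm_U w' : shift j.+1 hi ++ σ j :: w' ≡ σ j :: shift j.+1 hi ++ w'.
  by apply: shift_comm; lia.
have comm_Uinv w' : winv (shift j.+1 hi) ++ σ j :: w' ≡ σ j :: winv (shift j.+1 hi) ++ w'.
  by apply: winv_shift_comm; lia.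
rewrite /conj_word (shift_cons lt_jhi) winv_cons -!catA /=.
by rewrite comm_U c_braid_r ?comm_Uinv //; lia.
Qed.

Lemma conj_word_mid lo j hi w : (lo < j)%N -> (j.+2 <= hi <= m.+1)%N ->
  conj_word lo hi ++ σ j :: w ≡ σ j :: conj_word lo hi ++ w.
Proof.
move=> lt_loj le_jhi.
have comm_c w' : c lo ++ σ j.+1 :: w' ≡ σ j.+1 :: c lo ++ w'.
  by apply: br_comm_range (c_range _) _ _; lia.
by rewrite /conj_word -!catA shift_braid // comm_c winv_shift_braid.
Qed.

Lemma conj_word_sigma2 p r w : (p < r <= m)%N ->
  conj_word p r ++ σ r :: σ r :: w ≡ σ r :: σ r :: conj_word p r ++ w.
Proof.
elim: r w => [|r IHr] w /andP[lt_pr le_rm] //.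
have [lt_pr' | ->] : (p < r)%N \/ p = r by lia.
- have comm_X e w' : conj_word p r ++ gen r.+1 0 e :: w' ≡ gen r.+1 0 e :: conj_word p r ++ w'.
    by apply: conj_word_far; lia.
  have lt_rm : (r < m)%N by [].
  have IH w' := IHr w' (introT andP (conj lt_pr' (ltnW le_rm))).
  rewrite !conj_word_last // (braid_stt lt_rm) comm_X IH comm_X.
  by rewrite -(braid_stts' lt_rm) sigmaV_cancel.
- by rewrite (conj_word_base r) c_comm_sigma2.
Qed.

Lemma conj_word_high lo j w : (lo < j <= m)%N ->
  conj_word lo j.+1 ++ σ j :: w ≡ σ j :: conj_word lo j ++ w.
Proof.
move=> le_loj; have /andP[lt_loj _] := le_loj.
by rewrite conj_word_last // conj_word_sigma2 // sigmaV_cancel.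
Qed.

Lemma conj_word_above lo j w : (lo < j)%N ->
  conj_word lo j ++ σ j :: w ≡ σ j :: conj_word lo j.+1 ++ w.
Proof. by move=> lt_loj; rewrite conj_word_last // sigma_cancel. Qed.

Lemma conj_word_sigma lo hi j w : (lo < hi <= m.+1)%N -> (j <= m)%N ->
  (j != lo) || (hi != lo.+1) ->
  conj_word lo hi ++ σ j :: w ≡ σ j :: conj_word (transp j lo) (transp j hi) ++ w.
Proof.
move=> lohi le_jm not_adj; have /andP[lt_lohi le_him] := lohi.
have : (hi < j)%N || (j.+2 <= lo)%N \/ j.+1 = lo \/ j = lo /\ (lo.+1 < hi)%N \/
       (lo < j)%N /\ (j.+2 <= hi)%N \/ j.+1 = hi /\ (lo < j)%N \/ j = hi by lia.
case=> [far | [? | [[? ?] | [[? ?] | [[? ?] | ?]]]]]; subst.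
- by rewrite !transp_id ?conj_word_far //; lia.
- by rewrite transpR transp_id ?conj_word_below //; lia.
- by rewrite transpL transp_id ?conj_word_low //; lia.
- by rewrite !transp_id ?conj_word_mid //; lia.
- by rewrite transpR transp_id ?conj_word_high //; lia.
- by rewrite transpL transp_id ?conj_word_above //; lia.
Qed.

End ConjugateFamily.

Lemma x_word_range a j : (j <= m)%N -> all (in_range j j.+1) (x_word a j).
Proof. by move=> le_jm; rewrite /= /in_range !idx_gen // leqnn ltnSn. Qed.

Lemma z_word_range a j : (j <= m)%N -> all (in_range j j.+1) (z_word a j).
Proof. by move=> le_jm; rewrite /= /in_range !idx_gen // leqnn ltnSn. Qed.

Definition pair_word a p q : word :=
  if (p < q)%N then conj_word (x_word a) p q else conj_word (z_word a) q p.

Lemma pair_word_sigma a p q j w : (p <= m.+1)%N -> (q <= m.+1)%N -> p != q -> (j <= m)%N ->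
  pair_word a p q ++ σ j :: w ≡ σ j :: pair_word a (transp j p) (transp j q) ++ w.
Proof.
move=> le_pm le_qm neq_pq le_jm; rewrite /pair_word.
have x_sigma := conj_word_sigma (@x_word_range a) (@x_word_comm_sigma2 a)
  (@x_word_braid_l a) (@x_word_braid_r a).
have z_sigma := conj_word_sigma (@z_word_range a) (@z_word_comm_sigma2 a)
  (@z_word_braid_l a) (@z_word_braid_r a).
case: ltngtP neq_pq => // [lt_pq | lt_qp] _.
- have [[-> ->] | not_adj] : j = p /\ q = p.+1 \/ (j != p) || (q != p.+1) by lia.
    by rewrite transpL transpR ltnNge leqnSn /= !conj_word_base x_word_sigma.
  by rewrite transp_lt // x_sigma //; lia.
- have [[-> ->] | not_adj] : j = q /\ p = q.+1 \/ (j != q) || (p != q.+1) by lia.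
    by rewrite transpL transpR ltnSn !conj_word_base z_word_sigma.
  by rewrite ltnNge ltnW ?transp_lt //= z_sigma //; lia.
Qed.

Lemma pair_word_sigmaV a p q j w : (p <= m.+1)%N -> (q <= m.+1)%N -> p != q -> (j <= m)%N ->
  pair_word a p q ++ σ' j :: w ≡ σ' j :: pair_word a (transp j p) (transp j q) ++ w.
Proof.
move=> le_pm le_qm neq_pq le_jm.
have lt_jm : (j < m.+1)%N by [].
have back w' : σ j :: pair_word a p q ++ w' ≡ pair_word a (transp j p) (transp j q) ++ σ j :: w'.
  symmetry; rewrite -{2}(transpK j p) -{2}(transpK j q).
  by apply: pair_word_sigma; rewrite ?transp_le // (can_eq (transpK j)).
by symmetry; apply: (conj_winv (u := [:: σ j]) back).
Qed.

Lemma pair_word_letter a p q (j : 'I_m.+1) e w :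
  (p <= m.+1)%N -> (q <= m.+1)%N -> p != q ->
  pair_word a p q ++ ((j, 0, e) : letter m.+2 A) :: w
  ≡ ((j, 0, e) : letter m.+2 A) :: pair_word a (transp j p) (transp j q) ++ w.
Proof.
move=> le_pm le_qm neq_pq; have le_jm : (j <= m)%N by rewrite -ltnS.
have := pair_word_sigma a w le_pm le_qm neq_pq le_jm.
have := pair_word_sigmaV a w le_pm le_qm neq_pq le_jm.
by rewrite inord_val; case: e.
Qed.

Definition strand (w : aword m.+2) p : nat := Defs.perm_of w (inord p).

Lemma tperm_inord j p : (j <= m)%N -> (p <= m.+1)%N ->
  tperm (inord j) (inord j.+1) (inord p) = inord (transp j p) :> 'I_m.+2.
Proof.
move=> le_jm le_pm; rewrite /transp.
case: (eqVneq p j) => [->|neq_pj]; first by rewrite tpermL.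
case: (eqVneq p j.+1) => [->|neq_pj1]; first by rewrite tpermR.
by rewrite tpermD //; apply/eqP => /(congr1 val); rewrite /= !inordK //; lia.
Qed.

Lemma strand_nil p : (p <= m.+1)%N -> strand [::] p = p.
Proof. by move=> le_pm; rewrite /strand perm1 inordK. Qed.

Lemma strand_cons (l : 'I_m.+1 * bool) (w : aword m.+2) p : (p <= m.+1)%N ->
  strand (l :: w : aword m.+2) p = strand w (transp l.1 p).
Proof. by move=> le_pm; rewrite /strand /= permM tperm_inord // -ltnS. Qed.

Lemma embed_cons (l : 'I_m.+1 * bool) (w : aword m.+2) :
  embed A (l :: w : aword m.+2) = ((l.1, 0, l.2) : letter m.+2 A) :: embed A w.
Proof. by []. Qed.

Lemma pair_word_braid a (w : aword m.+2) p q t : (p <= m.+1)%N -> (q <= m.+1)%N -> p != q ->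
  pair_word a p q ++ embed A w ++ t ≡ embed A w ++ pair_word a (strand w p) (strand w q) ++ t.
Proof.
elim: w p q => [|[j e] w IHw] p q le_pm le_qm neq_pq; first by rewrite !strand_nil.
have lt_jm : (j < m.+1)%N by [].
have neq_t : transp j p != transp j q by rewrite (can_eq (transpK j)).
rewrite embed_cons pair_word_letter // IHw ?transp_le // !strand_cons //.
Qed.

Lemma strand_pure (w : aword m.+2) p : pure w -> (p <= m.+1)%N -> strand w p = p.
Proof. by rewrite /pure /strand => -> le_pm; rewrite perm1 inordK. Qed.

Lemma perm_of_rcons (w : aword m.+2) (l : 'I_m.+1 * bool) :
  Defs.perm_of (rcons w l) = (Defs.perm_of w * tperm (inord l.1) (inord l.1.+1))%g.
Proof. by elim: w => [|l' w IHw] /=; rewrite ?mul1g ?mulg1 // IHw mulgA. Qed.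

Lemma pure_conj (k : 'I_m.+1) (w : aword m.+2) :
  pure w -> pure ((k, false) :: rcons w (k, true) : aword m.+2).
Proof. by rewrite /pure /= perm_of_rcons => ->; rewrite mul1g tperm2. Qed.

Lemma x_comm_pure a (k : 'I_(m.+2).-1) (w : aword m.+2) t : pure w ->
  [:: G k a, Ginv k 0 & embed A w ++ t] ≡ embed A w ++ [:: G k a, Ginv k 0 & t].
Proof.
move=> pw; have le_km : (k <= m)%N by rewrite -ltnS.
have := pair_word_braid a w t (leqW le_km) (ltn_ord k) (negbT (ltn_eqF (ltnSn k))).
rewrite !strand_pure ?(leqW le_km) //.
by rewrite /pair_word ltnSn conj_word_base /= inord_val.
Qed.

Lemma y_comm_pure a (k : 'I_(m.+2).-1) (w : aword m.+2) : pure w ->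
  G k a :: embed A w ≡ rcons (embed A ((k, false) :: rcons w (k, true))) (G k a).
Proof.
move=> pw; have := x_comm_pure a k [:: G k 0] (pure_conj k pw).
rewrite /embed /= map_rcons -!cats1 -!catA /=.
by rewrite !(br_cancelV (G k 0)) cats0.
Qed.

End Strands.
End BraidGroupOverRing.

Theorem lemma2p3 (A : zmodType) (mul : A -> A -> A)
  (mulA : associative mul)
  (mulDl : left_distributive mul +%R) (mulDr : right_distributive mul +%R)
  (n : nat) (hn : (2 <= n)%N) (k : 'I_n.-1) :
  (forall w : aword n, pure w ->
     exists w' : aword n, forall a : A,
       br_eq mul (G k a :: embed A w) (rcons (embed A w') (G k a)))
  /\
  (forall (a : A) (w : aword n), pure w ->
     br_eq mul ([:: G k a; Ginv k 0] ++ embed A w)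
               (embed A w ++ [:: G k a; Ginv k 0])).
Proof.
case: n hn k => [|[|m]] // _ k.
split=> [w pw | a w pw].
  by exists ((k, false) :: rcons w (k, true)) => a; exact: y_comm_pure.
by have := x_comm_pure mulDl mulDr a k [::] pw; rewrite !cats0.
Qed.
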